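(* For every language $L\subseteq\Sigma^+$: if $(\Sigma^+\setminus L)\in LinConj$, then $L\in\mathtt{incl}$-$\mathtt{ESO}$-$\mathtt{HORN}$.
   Context: Fix a finite alphabet $\Sigma$. A nonempty word $w=w_1\cdots w_n$ is represented by the structure $\langle w\rangle=([1,n];(Q_s)_{s\in\Sigma},\mathtt{min},\mathtt{max},\mathtt{suc},\mathtt{pred})$ with $Q_s(i)\iff w_i=s$, $\mathtt{min}(i)\iff i=1$, $\mathtt{max}(i)\iff i=n$, $\mathtt{suc}(i)=\min(i+1,n)$, $\mathtt{pred}(i)=\max(i-1,1)$. For an integer $a$, $x+a$ denotes $\mathtt{suc}^a(x)$ if $a\ge0$ and $\mathtt{pred}^{-a}(x)$ if $a<0$; $y-b=\mathtt{pred}^b(y)$. An inclusion Horn formula is $\Phi=\exists\mathbf{R}\forall x\forall y\,\psi(x,y)$, $\mathbf{R}$ a finite set of binary relation symbols, $\psi$ a conjunction of Horn clauses over $\{(Q_s)_{s\in\Sigma},\mathtt{min},\mathtt{max},\mathtt{suc},\mathtt{pred}\}\cup\mathbf{R}\cup\{=,\le,<\}$, each of the form $x\le y\wedge\delta_1\wedge\cdots\wedge\delta_r\to\delta_0$ with $\delta_0$ an atom $R(x,y)$ ($R\in\mathbf{R}$) or $\bot$, each $\delta_i$ one of: $U(x+a)$, $\neg U(x+a)$, $U(y+a)$, $\neg U(y+a)$ for $U\in\{(Q_s)_{s\in\Sigma},\mathtt{min},\mathtt{max}\}$, $a\in\mathbb Z$; $x=y$ or $x<y$; $S(x+a,y-b)\wedge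 x+a\le y-b$ with $S\in\mathbf{R}$, $a,b\ge0$. $\mathtt{incl}$-$\mathtt{ESO}$-$\mathtt{HORN}$ is the class of languages $\{w\in\Sigma^+:\langle w\rangle\models\Phi\}$. A linear conjunctive grammar is $G=(\Sigma,N,P,S)$ with nonterminals $N$, start symbol $S\in N$, and a finite set $P$ of rules $A\to\alpha_1\&\cdots\&\alpha_k$ ($k\ge1$), each $\alpha_i\in\Sigma^*\cup\Sigma^*N\Sigma^*$. The languages $(L(A))_{A\in N}$ form the least (componentwise) solution of $L(A)=\bigcup_{(A\to\alpha_1\&\cdots\&\alpha_k)\in P}\bigcap_iL(\alpha_i)$, where $L(uBv)=uL(B)v$, $L(u)=\{u\}$ for $u,v\in\Sigma^*$, $B\in N$; $L(G)=L(S)$. $LinConj$ is the class of languages generated by such grammars. *)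

From mathcomp Require Import all_boot all_algebra.
From Stdlib Require List.
Set Implicit Arguments. Unset Strict Implicit. Unset Printing Implicit Defensive.

(* Words are [seq Sigma]; a language is a predicate on words.
   Positions of a word w of length n are the naturals 1..n. *)

Section Defs.
Variable Sigma : finType.

Definition wsuc (w : seq Sigma) (i : nat) : nat := minn i.+1 (size w).
Definition wpred (i : nat) : nat := maxn i.-1 1.
Definition wQ (w : seq Sigma) (s : Sigma) (i : nat) : bool :=
  (0 < i <= size w) && (nth s w i.-1 == s).
Definition wmin (i : nat) : bool := i == 1.
Definition wmax (w : seq Sigma) (i : nat) : bool := i == size w.

(* x + a for a : int  (suc^a or pred^(-a)) *)
Definition shift (w : seq Sigma) (x : nat) (a : int) : nat :=
  match a with
  | Posz k => iter k (wsuc w) x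
  | Negz k => iter k.+1 wpred x
  end.
Definition shiftdown (y : nat) (b : nat) : nat := iter b wpred y.

Inductive fovar := VX | VY.
Inductive upred := UQ of Sigma | UMin | UMax.

Inductive hlit (Rel : Type) :=
  | LUnary of bool & upred & fovar & int
      (* LUnary true U z a = U(z+a), LUnary false U z a = ~ U(z+a) *)
  | LEq
  | LLt
  | LRel of Rel & nat & nat (* S(x+a, y-b) /\ x+a <= y-b, a b >= 0 *).

(* A Horn clause  x <= y /\ d_1 /\ ... /\ d_r -> d_0 ;
   head [Some R] is R(x,y), head [None] is bottom. *)
Record hclause (Rel : Type) := HClause { hbody : seq (hlit Rel); hhead : option Rel }.

Definition upred_sem (w : seq Sigma) (U : upred) (i : nat) : bool :=
  match U with UQ s => wQ w s i | UMin => wmin i | UMax => wmax w i end.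

Definition hlit_sem (Rel : Type) (w : seq Sigma) (I : Rel -> nat -> nat -> Prop)
    (x y : nat) (d : hlit Rel) : Prop :=
  match d with
  | LUnary b U z a =>
      let p := shift w (if z is VX then x else y) a in
      upred_sem w U p = b
  | LEq => x = y
  | LLt => x < y
  | LRel Sr a b =>
      I Sr (shift w x (Posz a)) (shiftdown y b) /\ shift w x (Posz a) <= shiftdown y b
  end.

Definition hclause_sem (Rel : Type) (w : seq Sigma) (I : Rel -> nat -> nat -> Prop)
    (x y : nat) (c : hclause Rel) : Prop :=
  x <= y -> (forall d, List.In d (hbody c) -> hlit_sem w I x y d) ->
  match hhead c with Some R => I R x y | None => False end.

Definition horn_sat (Rel : Type) (cls : seq (hclause Rel)) (w : seq Sigma) : Prop :=
  exists I : Rel -> nat -> nat -> Prop,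
    forall x y, 0 < x <= size w -> 0 < y <= size w ->
      forall c, List.In c cls -> hclause_sem w I x y c.

Definition incl_ESO_HORN (L : seq Sigma -> Prop) : Prop :=
  exists (Rel : finType) (cls : seq (hclause Rel)),
    forall w, L w <-> (w <> [::] /\ horn_sat cls w).

Inductive lconj (N : Type) :=
  | CTerm of seq Sigma
  | CNont of seq Sigma & N & seq Sigma .

(* a rule A -> alpha_1 & ... & alpha_k is a pair (A, [alpha_1; ...; alpha_k]) *)
Definition lrule (N : Type) := (N * seq (lconj N))%type.

Definition lconj_sem (N : Type) (X : N -> seq Sigma -> Prop) (a : lconj N)
    (w : seq Sigma) : Prop :=
  match a with
  | CTerm u => w = u
  | CNont u B v => exists w', w = u ++ w' ++ v /\ X B w'
  end.

Definition lstep (N : Type) (P : seq (lrule N)) (X : N -> seq Sigma -> Prop)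
    (A : N) (w : seq Sigma) : Prop :=
  exists alphas, List.In (A, alphas) P /\
    forall a, List.In a alphas -> lconj_sem X a w.

(* The least (componentwise) solution, as the intersection of all
   pre-fixed points of the monotone operator lstep (Knaster-Tarski). *)
Definition lgen (N : Type) (P : seq (lrule N)) (A : N) (w : seq Sigma) : Prop :=
  forall X : N -> seq Sigma -> Prop,
    (forall B u, lstep P X B u -> X B u) -> X A w.

Definition LinConj (L : seq Sigma -> Prop) : Prop :=
  exists (N : finType) (P : seq (lrule N)) (St : N),
    (forall r, List.In r P -> r.2 <> [::]) /\
    (forall w, L w <-> lgen P St w).

End Defs.

From mathcomp Require Import all_boot all_algebra zify.
From Stdlib Require Import Classical ClassicalEpsilon.
Set Implicit Arguments. Unset Strict Implicit. Unset Printing Implicit Defensive.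

(* Let G be a linear conjunctive grammar for the complement of L. The Horn
   formula has a binary relation R_A for every nonterminal A, meant to hold at
   (x, y) iff the factor w[x..y] belongs to L(A), and a relation R_= forced to
   contain the diagonal. A conjunct u B v of a rule for A is checked at (x, y)
   by reading u forwards from x and v backwards from y and asking R_B at
   (x + |u|, y - |v|); a rule body, a conjunction of disjunctions of such
   tests, is distributed into one Horn clause per choice. Every model of these
   clauses contains the least solution of G, and the least solution is itself
   a model unless w is in L(S); so adding min(x) /\ max(y) /\ R_S(x, y) -> False
   yields a formula that holds in <w> exactly when w is not generated by G,
   i.e. when w is in L. *)

Section Factors.
Variables (T : eqType) (w : seq T).

(* Positions are 1-based: [factor x y] is w_x ... w_y. *)
Definition factor (x y : nat) : seq T := drop x.-1 (take y w).

Lemma size_factor x y : y <= size w -> size (factor x y) = y - x.-1.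
Proof. by move=> hy; rewrite size_drop size_takel. Qed.

Lemma factor_full : factor 1 (size w) = w.
Proof. by rewrite /factor take_size drop0. Qed.

Lemma factor1 x0 x : 0 < x <= size w -> factor x x = [:: nth x0 w x.-1].
Proof.
case: x => //= x hx; rewrite /factor (take_nth x0) // -cats1 drop_size_cat //.
by rewrite size_takel // ltnW.
Qed.

Lemma cat3_eq (f u z v : seq T) :
  f = u ++ z ++ v <->
  [/\ size u + size v <= size f, prefix u f, suffix v f
    & z = drop (size u) (take (size f - size v) f)].
Proof.
split=> [->|[huv /prefixP [s hs] /suffixP [t ht] ->]].
  rewrite catA suffix_suffix -catA prefix_prefix !size_cat; split=> //; first lia.
  by rewrite catA take_size_cat ?drop_size_cat // size_cat; lia.
have hut : size u <= size t by move: huv; rewrite ht size_cat; lia.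
have -> : take (size f - size v) f = t by rewrite ht take_size_cat // size_cat addnK.
have htu : take (size u) t = u by rewrite -(takel_cat v hut) -ht hs take_size_cat.
by rewrite catA -{1}htu cat_take_drop.
Qed.

Lemma prefix_factor x y (u : seq T) : x.-1 + size u <= y -> y <= size w ->
  prefix u (factor x y) = prefix u (drop x.-1 w).
Proof.
by move=> hu hy; rewrite !prefixE /factor take_drop take_takel -?take_drop //; lia.
Qed.

Lemma suffix_factor x y (v : seq T) : x.-1 + size v <= y -> y <= size w ->
  suffix v (factor x y) = suffix v (take y w).
Proof.
move=> hv hy; rewrite !suffixE size_factor // size_takel // /factor drop_drop.
by congr (drop _ _ == _); lia.
Qed.

Lemma factor_middle x y (u v : seq T) : 0 < x -> x.-1 + size u + size v <= y -> y <= size w ->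
  drop (size u) (take (y - x.-1 - size v) (factor x y)) = factor (x + size u) (y - size v).
Proof.
move=> hx huv hy; rewrite /factor take_drop take_takel; last lia.
by rewrite drop_drop; congr (drop _ (take _ _)); lia.
Qed.

Lemma factor_cat3 x y (u z v : seq T) : 0 < x -> x <= y -> y <= size w ->
  factor x y = u ++ z ++ v <->
  [/\ x.-1 + size u + size v <= y, prefix u (drop x.-1 w), suffix v (take y w)
    & z = factor (x + size u) (y - size v)].
Proof.
move=> hx hxy hy; rewrite cat3_eq size_factor //.
split=> -[huv hu hv ->].
- have {}huv : x.-1 + size u + size v <= y by lia.
  by rewrite -(prefix_factor (y := y)) -?(suffix_factor (x := x)) -?factor_middle //; lia.
- rewrite (prefix_factor (y := y)) ?suffix_factor ?factor_middle //; try lia.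
  by split=> //; lia.
Qed.

End Factors.

Lemma wQ_nth (Sigma : finType) (w : seq Sigma) s x :
  0 < x <= size w -> wQ w s x = (nth s w x.-1 == s).
Proof. by rewrite /wQ => ->. Qed.

#[local] Arguments shift : simpl never.
#[local] Arguments shiftdown : simpl never.

Section Encoding.
Variables (Sigma : finType) (Rel : Type) (w : seq Sigma) (I : Rel -> nat -> nat -> Prop).

Local Notation lit := (hlit Sigma Rel).
Local Notation holds x y := (List.Forall (hlit_sem w I x y)).

Lemma shift_add x k : x + k <= size w -> shift w x k = x + k.
Proof.
rewrite /shift; elim: k => [|k IH] hk /=; first by rewrite addn0.
by rewrite IH /wsuc; lia.
Qed.

Lemma shiftdown_sub y j : j < y -> shiftdown y j = y - j.
Proof.
rewrite /shiftdown; elim: j => [|j IH] hj /=; first by rewrite subn0.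
by rewrite IH /wpred; lia.
Qed.

Lemma shift_opp x j : shift w x (- j%:Z)%R = shiftdown x j.
Proof. by case: j => // j; rewrite -NegzE. Qed.

(* The [~ max] (resp. [~ min]) guards are needed because [suc] (resp. [pred])
   sticks at the last (resp. first) position, which would read a letter twice. *)
Fixpoint read_right (u : seq Sigma) (i : nat) : seq lit :=
  if u is s :: u' then
    LUnary Rel true (UQ s) VX i :: LUnary Rel false (UMax Sigma) VX i :: read_right u' i.+1
  else [::].

Fixpoint read_left (r : seq Sigma) (j : nat) : seq lit :=
  if r is s :: r' then
    LUnary Rel true (UQ s) VY (- j%:Z)%R :: LUnary Rel false (UMin Sigma) VY (- j%:Z)%R
      :: read_left r' j.+1
  else [::].

Lemma read_rightP x y u i : 0 < x -> x + i <= size w ->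
  holds x y (read_right u i) <-> x + i + size u <= size w /\ prefix u (drop (x.-1 + i) w).
Proof.
elim: u i => [|s u IH] i hx hi /=; first by rewrite addn0 prefix0s.
rewrite !List.Forall_cons_iff /= shift_add // wQ_nth; last lia.
rewrite (drop_nth s); last lia.
rewrite prefix_cons /wmax -addnS eq_sym (_ : (x + i).-1 = x.-1 + i); last lia.
have hmax : ((x + i == size w) = false) <-> x + i < size w.
  by rewrite ltn_neqAle hi andbT; case: eqP.
rewrite hmax; split=> [[/eqP <- [hlt hu]]|[hu /andP [/eqP <- hp]]].
- have [|hu' hp] := (IH i.+1 hx _).1 hu; first lia.
  by rewrite eqxx hp; split=> //; lia.
- rewrite eqxx; split=> //; split; first lia.
  by apply/(IH i.+1 hx); [lia | split=> //; lia].
Qed.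

Lemma read_leftP x y r j : 0 < y <= size w -> j < y ->
  holds x y (read_left r j) <-> j + size r < y /\ suffix (rev r) (take (y - j) w).
Proof.
elim: r j => [|s r IH] j hy hj /=; first by rewrite addn0 suffix0s.
rewrite !List.Forall_cons_iff /= shift_opp shiftdown_sub // wQ_nth; last lia.
rewrite rev_cons (_ : y - j = (y - j.+1).+1); last lia.
rewrite (take_nth s); last lia.
rewrite suffix_rcons /wmin /= eq_sym.
have hmin : ((y - j.+1).+1 == 1) = false <-> j.+1 < y by rewrite eqSS; split=> /eqP; lia.
rewrite hmin; split=> [[/eqP <- [hlt hr]]|[hr /andP [/eqP <- hp]]].
- have [hr' hp] := (IH j.+1 hy hlt).1 hr.
  by rewrite eqxx hp; split=> //; lia.
- rewrite eqxx; split=> //; split; first lia.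
  by apply/(IH j.+1 hy); [lia | split=> //; lia].
Qed.

Definition wrap_lits (u : seq Sigma) (R : Rel) (v : seq Sigma) : seq lit :=
  read_right u 0 ++ read_left (rev v) 0 ++ [:: LRel Sigma R (size u) (size v)].

Lemma wrap_litsP x y u R v : 0 < x -> x <= y -> y <= size w ->
  holds x y (wrap_lits u R v) <->
  [/\ x + size u + size v <= y, factor w x y = u ++ factor w (x + size u) (y - size v) ++ v
    & I R (x + size u) (y - size v)].
Proof.
move=> hx hxy hy.
rewrite !List.Forall_app List.Forall_cons_iff read_rightP ?read_leftP; try lia.
rewrite !addn0 add0n subn0 size_rev revK /=.
split=> [[[hu pu] [[hv sv] [[hI hle] _]]]|[huv e hI]].
- rewrite shift_add ?shiftdown_sub // in hI hle.
  have huv : x + size u + size v <= y by lia.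
  split=> //; apply/(factor_cat3 u _ v hx hxy hy); split=> //.
  by apply: leq_trans huv; rewrite !leq_add2r leq_pred.
- have [_ pu sv _] := (factor_cat3 u _ v hx hxy hy).1 e.
  rewrite shift_add ?shiftdown_sub; try lia.
  by do !split=> //; lia.
Qed.

Variable eqR : Rel.

(* A nonempty word [s :: u] is matched by reading [u] backwards from [y] and
   forcing the rest [x .. y - |u|] to be the single position [x] through
   [eqR], which is meant to be equality. *)
Definition word_lits (z : seq Sigma) : seq (seq lit) :=
  if z is s :: u then [:: LUnary Rel true (UQ s) VX 0 :: wrap_lits [::] eqR u] else [::].

Lemma word_lits_sound x y (z : seq Sigma) b : 0 < x -> x <= y -> y <= size w ->
  (forall p q, I eqR p q -> p = q) ->
  List.In b (word_lits z) -> holds x y b -> factor w x y = z.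
Proof.
move=> hx hxy hy eqRP; case: z => [|s u] //= [<-|[]].
rewrite List.Forall_cons_iff wrap_litsP //= shift_add ?addn0; last lia.
move=> [hs [_ -> /eqRP hxu]].
have hxw : 0 < x <= size w by apply/andP; split; lia.
by move: hs; rewrite -hxu (factor1 s hxw) wQ_nth // => /eqP ->.
Qed.

Lemma word_lits_complete x y (z : seq Sigma) : 0 < x -> x <= y -> y <= size w ->
  (forall p, 0 < p <= size w -> I eqR p p) ->
  factor w x y = z -> exists2 b, List.In b (word_lits z) & holds x y b.
Proof.
move=> hx hxy hy eqR_refl; case: z => [|s u] e.
  by have := size_factor x hy; rewrite e /=; lia.
have [_ _ _ hs] := (factor_cat3 [::] [:: s] u hx hxy hy).1 e.
rewrite addn0 in hs.
have hxu : y - size u = x.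
  by have := @size_factor _ w x (y - size u); rewrite -hs /=; lia.
have hxw : 0 < x <= size w by apply/andP; split; lia.
move: hs; rewrite hxu (factor1 s hxw) => -[hs].
exists (LUnary Rel true (UQ s) VX 0 :: wrap_lits [::] eqR u); first by left.
rewrite List.Forall_cons_iff wrap_litsP //= shift_add ?addn0 ?wQ_nth ?hxu -?hs ?eqxx //; try lia.
by split=> //; split; [lia | rewrite e (factor1 s hxw) -hs | exact: eqR_refl].
Qed.

End Encoding.

Fixpoint choices (T : Type) (bss : seq (seq (seq T))) : seq (seq T) :=
  if bss is bs :: bss' then List.flat_map (fun b => List.map (cat b) (choices bss')) bs
  else [:: [::]].

Lemma choicesP (T : Type) (Q : T -> Prop) (bss : seq (seq (seq T))) :
  (exists2 c, List.In c (choices bss) & List.Forall Q c) <->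
  List.Forall (fun bs => exists2 b, List.In b bs & List.Forall Q b) bss.
Proof.
elim: bss => [|bs bss IH] /=.
  by split=> _; [constructor | exists [::]; [left | constructor]].
rewrite List.Forall_cons_iff -IH; split.
- move=> [_ /List.in_flat_map [b [hb /List.in_map_iff [c [<- hc]]]] /List.Forall_app [qb qc]].
  by split; [exists b | exists c].
- move=> [[b hb qb] [c hc qc]]; exists (b ++ c); last exact/List.Forall_app.
  by apply/List.in_flat_map; exists b; split=> //; apply/List.in_map_iff; exists c.
Qed.

Section LeastSolution.
Variables (Sigma : finType) (N : Type) (P : seq (lrule Sigma N)).

Lemma lstep_mono (X Y : N -> seq Sigma -> Prop) A z :
  (forall B u, X B u -> Y B u) -> lstep P X A z -> lstep P Y A z.
Proof.
move=> XY [al [hin hal]]; exists al; split=> // a /hal.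
by case: a => [u|u B v] //= [z' [-> /XY]]; exists z'.
Qed.

Lemma lgen_fold A z : lstep P (lgen P) A z -> lgen P A z.
Proof. by move=> h X HX; apply/HX/(lstep_mono _ h) => B u; apply. Qed.

End LeastSolution.

Section Grammar.
Variables (Sigma : finType) (N : Type) (P : seq (lrule Sigma N)) (St : N).
Variable nullable : N -> bool.

Local Notation lit := (hlit Sigma (option N)).

(* Only nonempty factors are represented, so a conjunct [u B v] with
   [nullable B] also gets the plain word [u ++ v] as an alternative. *)
Definition conj_alts (a : lconj Sigma N) : seq (seq lit) :=
  match a with
  | CTerm z => word_lits None z
  | CNont u B v =>
      wrap_lits u (Some B) v :: (if nullable B then word_lits None (u ++ v) else [::])
  end.

Definition rule_clauses (r : lrule Sigma N) : seq (hclause Sigma (option N)) :=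
  List.map (fun c => HClause c (Some (Some r.1))) (choices (List.map conj_alts r.2)).

(* [None] stands for R_= and [Some A] for R_A. *)
Definition grammar_clauses : seq (hclause Sigma (option N)) :=
  HClause [:: LEq Sigma (option N)] (Some None)
  :: HClause [:: LUnary (option N) true (UMin Sigma) VX 0;
                 LUnary (option N) true (UMax Sigma) VY 0; LRel Sigma (Some St) 0 0] None
  :: List.flat_map rule_clauses P.

Lemma conj_alts_sound (X : N -> seq Sigma -> Prop) w I x y a b :
  0 < x -> x <= y -> y <= size w ->
  (forall p q, I None p q -> p = q) ->
  (forall B p q, I (Some B) p q -> X B (factor w p q)) ->
  (forall B, nullable B -> X B [::]) ->
  List.In b (conj_alts a) -> List.Forall (hlit_sem w I x y) b -> lconj_sem X a (factor w x y).
Proof.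
move=> hx hxy hy IeqP IX nullX; case: a => [z|u B v] /=.
  exact: word_lits_sound.
case=> [<- /(wrap_litsP _ _ _ _ hx hxy hy) [_ e /IX hX]|].
  by exists (factor w (x + size u) (y - size v)).
case: ifP => // /nullX hB hb /(word_lits_sound hx hxy hy IeqP hb) ->.
by exists [::].
Qed.

Lemma conj_alts_complete (X : N -> seq Sigma -> Prop) w I x y a :
  0 < x -> x <= y -> y <= size w ->
  (forall p, 0 < p <= size w -> I None p p) ->
  (forall B p q, 0 < p -> p <= q -> q <= size w -> X B (factor w p q) -> I (Some B) p q) ->
  (forall B, X B [::] -> nullable B) ->
  lconj_sem X a (factor w x y) ->
  exists2 b, List.In b (conj_alts a) & List.Forall (hlit_sem w I x y) b.
Proof.
move=> hx hxy hy Irefl XI Xnull; case: a => [z|u B v] /=.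
  exact: word_lits_complete.
move=> [[|t z] [e hX]].
  have [b hb hl] := word_lits_complete hx hxy hy Irefl e.
  by exists b => //; right; rewrite Xnull.
have [_ _ _ ez] := (factor_cat3 u (t :: z) v hx hxy hy).1 e.
have huv : x + size u + size v <= y.
  by have := congr1 size e; rewrite size_factor // !size_cat /=; lia.
exists (wrap_lits u (Some B) v); first by left.
apply/(wrap_litsP _ _ _ _ hx hxy hy); split=> //; first by rewrite e ez.
by apply: XI; rewrite -?ez //; lia.
Qed.

Hypothesis nullableP : forall B, nullable B <-> lgen P B [::].

Lemma lgen_in_model w I :
  (forall x y, 0 < x <= size w -> 0 < y <= size w ->
     forall c, List.In c grammar_clauses -> hclause_sem w I x y c) ->
  forall A x y, 0 < x -> x <= y -> y <= size w -> lgen P A (factor w x y) -> I (Some A) x y.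
Proof.
move=> HI.
have Irefl p : 0 < p <= size w -> I None p p.
  by move=> hp; apply: (HI p p hp hp _ (or_introl erefl) (leqnn p)) => d [<-|[]].
(* [X] keeps [lgen] itself so that [X B [::]] still yields [nullable B]. *)
pose X A z := lgen P A z /\
  forall x y, 0 < x -> x <= y -> y <= size w -> factor w x y = z -> I (Some A) x y.
suff HX : forall A z, lstep P X A z -> X A z.
  by move=> A x y hx hxy hy /(_ X HX) [_]; apply.
move=> A z hst; split; first by apply: lgen_fold; apply: (lstep_mono _ hst) => B u [].
move=> x y hx hxy hy e; case: hst => al [hin hal].
have [c hc hl] : exists2 c, List.In c (choices (List.map conj_alts al))
    & List.Forall (hlit_sem w I x y) c.
  apply/choicesP/List.Forall_forall => _ /List.in_map_iff [a [<- ha]].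
  apply: (conj_alts_complete (X := X)) => //.
  - by move=> B p q hp hpq hq [_]; apply.
  - by move=> B [/nullableP].
  - by rewrite e; apply: hal.
have hxw : 0 < x <= size w by apply/andP; split; lia.
have hyw : 0 < y <= size w by apply/andP; split; lia.
apply: (HI x y hxw hyw (HClause c (Some (Some A)))) => //; last exact/List.Forall_forall.
do 2 right; apply/List.in_flat_map; exists (A, al); split=> //.
by apply/List.in_map_iff; exists c.
Qed.

Definition lgen_rel (w : seq Sigma) (R : option N) (p q : nat) : Prop :=
  if R is Some A then lgen P A (factor w p q) else p = q.

Lemma lgen_rel_model w x y c : ~ lgen P St w ->
  0 < x <= size w -> 0 < y <= size w -> List.In c grammar_clauses ->
  hclause_sem w (lgen_rel w) x y c.
Proof.
move=> nSt /andP [hx _] /andP [_ hy].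
case=> [<-|[<-|/List.in_flat_map [[A al] [hin /List.in_map_iff [c0 [<- hc0]]]]]] hxy /= hb.
- exact: (hb (LEq _ _) (or_introl erefl)).
- move: (hb _ (or_introl erefl)) (hb _ (or_intror (or_introl erefl))).
  move: (hb _ (or_intror (or_intror (or_introl erefl)))) => /=.
  rewrite !shift_add ?shiftdown_sub ?addn0 ?subn0 //; try lia.
  by move=> [+ _] /eqP hx1 /eqP hy1; rewrite /wmin /wmax hx1 hy1 factor_full.
- apply: lgen_fold; exists al; split=> // a ha.
  have hc : exists2 c, List.In c (choices (List.map conj_alts al))
      & List.Forall (hlit_sem w (lgen_rel w) x y) c.
    by exists c0 => //; apply/List.Forall_forall.
  move/choicesP/List.Forall_forall: hc => /(_ _ (List.in_map conj_alts _ _ ha)) [b hab hl].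
  apply: (conj_alts_sound (I := lgen_rel w) hx hxy hy _ _ _ hab hl) => //.
  by move=> B /nullableP.
Qed.

Lemma horn_sat_grammar_clauses w : w <> [::] ->
  horn_sat grammar_clauses w <-> ~ lgen P St w.
Proof.
move=> /eqP; rewrite -size_eq0 -lt0n => hw; split.
- move=> [I HI] hSt.
  have h1w : 0 < 1 <= size w by [].
  have hww : 0 < size w <= size w by rewrite hw leqnn.
  apply: (HI 1 (size w) h1w hww _ (or_intror (or_introl erefl)) hw).
  move=> d [<-|[<-|[<-|[]]]] /=; rewrite ?shift_add ?shiftdown_sub ?addn0 ?subn0 //.
  - exact: eqxx.
  - by split=> //; apply: (lgen_in_model HI) => //; rewrite factor_full.
- by move=> nSt; exists (lgen_rel w) => x y hx hy c; apply: lgen_rel_model.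
Qed.

End Grammar.

Theorem lemma8 (Sigma : finType) (L : seq Sigma -> Prop) :
  (forall w, L w -> w <> [::]) ->
  LinConj (fun w => w <> [::] /\ ~ L w) ->
  incl_ESO_HORN L.
Proof.
move=> hL [N [P [St [_ hG]]]].
have [nullable nullableP] : exists nullable : N -> bool, forall B, nullable B <-> lgen P B [::].
  exists (fun B => if excluded_middle_informative (lgen P B [::]) then true else false).
  by move=> B; case: excluded_middle_informative.
exists (option N : finType), (grammar_clauses P St nullable) => w.
split=> [hw | [hw /(horn_sat_grammar_clauses St nullableP hw) nG]].
- split; first exact: hL.
  by apply/(horn_sat_grammar_clauses St nullableP (hL w hw)) => /hG [].
- by apply: NNPP => nL; apply/nG/hG.
Qed.
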